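(* Let $\Gamma$ be a finite $R$-thick vertex-transitive digraph with no loop. Then: (a) $\Gamma\cong\Sigma[\overline{\mathrm{K}}_b]$ for some digraph $\Sigma$ and some integer $b\geqslant 2$; (b) if $\Gamma$ is a normal Cayley digraph, then $\Gamma$ has order at most $4$; (c) if $\Gamma$ is a normal circulant with nonempty arc set, then $\Gamma\cong\mathrm{C}_4$.
   Context: A digraph is a pair $(V,A)$ with $A\subseteq V\times V$; a loop is an arc $(v,v)$; the order is $|V|$. For $v\in V$, $\Gamma^+(v)=\{w:(v,w)\in A\}$ and $\Gamma^-(v)=\{u:(u,v)\in A\}$. $\Gamma$ is $R$-thick if there are distinct vertices $u,v$ with $\Gamma^+(u)=\Gamma^+(v)$ and $\Gamma^-(u)=\Gamma^-(v)$. $\overline{\mathrm{K}}_b$ has $b$ vertices and no arcs; $\mathrm{C}_4$ is the undirected $4$-cycle viewed as a digraph. Lexicographic product $\Sigma[\Delta]$: vertex set $V(\Sigma)\times V(\Delta)$, $(u_1,u_2)\to(v_1,v_2)$ iff $u_1\to v_1$ in $\Sigma$, or $u_1=v_1$ and $u_2\to v_2$ in $\Delta$. The Cayley digraph $\mathrm{Cay}(G,S)$ ($S\subseteq G$ nonempty) has vertex set $G$ and $x\to y$ iff $yx^{-1}\in S$; it is normal if the group $\widehat G$ of right multiplications $x\mapsto xg$ is normal in its automorphism group; $\Gamma$ is a normal Cayley digraph if it is isomorphic to a normal Cayley digraph of some group. $\Gamma$ is a normal circulant if $\mathrm{Aut}(\Gamma)$ has a cyclic subgroup regular on $V$ and normal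 in $\mathrm{Aut}(\Gamma)$. *)

From mathcomp Require Import all_boot all_fingroup all_solvable.
Set Implicit Arguments. Unset Strict Implicit. Unset Printing Implicit Defensive.
Local Open Scope group_scope.

Section Digraphs.

Variables (V : finType) (A : rel V).

Definition loopless : Prop := forall v : V, ~~ A v v.

Definition has_arc : Prop := exists x y : V, A x y.

Definition outnb (v : V) : {set V} := [set w | A v w].
Definition innb (v : V) : {set V} := [set u | A u v].

Definition R_thick : Prop :=
  exists u v : V, u != v /\ outnb u = outnb v /\ innb u = innb v.

Definition Aut : {set {perm V}} :=
  [set g : {perm V} | [forall x, forall y, A (g x) (g y) == A x y]].

Definition vertex_transitive : Prop :=
  forall x y : V, exists2 g, g \in Aut & g x = y.

Definition regular_on (H : {set {perm V}}) : Prop :=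
  forall x y : V, #|[set h in H | h x == y]| = 1%N.

Definition normal_circulant : Prop :=
  exists H : {group {perm V}},
    [/\ H \subset Aut, cyclic H, regular_on H & H <| Aut].

End Digraphs.

Definition digraph_iso (V W : finType) (A : rel V) (B : rel W) : Prop :=
  exists f : V -> W, bijective f /\ forall x y, B (f x) (f y) = A x y.

Definition lexprod (S D : finType) (sig : rel S) (del : rel D) : rel (S * D) :=
  fun u v => sig u.1 v.1 || ((u.1 == v.1) && del u.2 v.2).

Definition emptyK (b : nat) : rel 'I_b := fun _ _ => false.
Arguments emptyK b : clear implicits.

Definition C4 : rel 'I_4 :=
  fun i j => (val j == (val i).+1 %% 4) || (val i == (val j).+1 %% 4).

Definition cayley (gT : finGroupType) (S : {set gT}) : rel gT :=
  fun x y => ((y * x^-1)%g \in S).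

Definition rmul_perm (gT : finGroupType) (g : gT) : {perm gT} :=
  perm (mulIg g).

Definition Ghat (gT : finGroupType) : {set {perm gT}} :=
  [set rmul_perm g | g : gT].

Definition normal_cayley_of (gT : finGroupType) (S : {set gT}) : Prop :=
  Ghat gT <| Aut (cayley S).

Definition is_normal_cayley (V : finType) (A : rel V) : Prop :=
  exists (gT : finGroupType) (S : {set gT}),
    [/\ S != set0, normal_cayley_of S & digraph_iso A (cayley S)].

(* Call u, v twins if they have the same in- and out-neighbourhoods.  Being
   twins is an equivalence compatible with the arcs, and swapping two twins is
   an automorphism.  Vertex transitivity makes all twin classes have the same
   size b >= 2, so Gamma = Sigma[K_b] with Sigma induced on class representatives.

   If a regular subgroup H is normalised by the transposition t = (u v) of two
   twins and t fixes a third vertex x, then h |-> h x maps the centraliser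
   C_H(t) onto the fixed points of t, because (h ^ t) x = t (h x).  Hence
   |V| - 2 divides |H| = |V|, so |V| <= 4.  With at most four vertices, an arc
   x -> y and twins x', y' of x, y, the two twin classes {x, x'} and {y, y'}
   exhaust V and Gamma is complete bipartite between them, i.e. C_4. *)

From Pilot Require Import Defs.
From mathcomp Require Import all_boot all_fingroup all_solvable zify.
Set Implicit Arguments. Unset Strict Implicit. Unset Printing Implicit Defensive.
Local Open Scope group_scope.

Section Twins.

Variables (V : finType) (A : rel V).

Definition twin_key (v : V) : {set V} * {set V} := (outnb A v, innb A v).

Definition twins (u v : V) : bool := twin_key u == twin_key v.

Lemma twins_equiv : equivalence_rel twins.
Proof. by move=> x y z; split; [exact: eqxx | rewrite /twins => /eqP ->]. Qed.

Lemma twins_refl v : twins v v.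
Proof. exact: eqxx. Qed.

Lemma twins_sym u v : twins u v -> twins v u.
Proof. by rewrite /twins eq_sym. Qed.

Lemma R_thick_twins : R_thick A <-> exists u v, u != v /\ twins u v.
Proof.
split=> [[u [v [uv [Hout Hin]]]] | [u [v [uv /eqP[Hout Hin]]]]].
  by exists u, v; rewrite /twins /twin_key Hout Hin.
by exists u, v.
Qed.

Lemma twinsP u v :
  reflect (forall z, A u z = A v z /\ A z u = A z v) (twins u v).
Proof.
apply: (iffP eqP) => [[/setP Hout /setP Hin] z | tuv].
  by have := Hout z; have := Hin z; rewrite !inE.
by congr pair; apply/setP => z; rewrite !inE; case: (tuv z).
Qed.

Lemma twins_arc u u' v v' : twins u u' -> twins v v' -> A u v = A u' v'.
Proof.
by move=> /twinsP tuu' /twinsP tvv'; rewrite (tuu' v).1 (tvv' u').2.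
Qed.

Lemma twins_noarc u v : loopless A -> twins u v -> ~~ A u v.
Proof. by move=> noloop tuv; rewrite (twins_arc tuv (twins_refl v)). Qed.

End Twins.

Lemma twins_iso (V W : finType) (A : rel V) (B : rel W) (f : V -> W) u v :
    bijective f -> (forall x y, B (f x) (f y) = A x y) ->
  twins B (f u) (f v) = twins A u v.
Proof.
move=> [g fK gK] fA; apply/twinsP/twinsP => tuv z.
  by have := tuv (f z); rewrite !fA.
by rewrite -(gK z) !fA.
Qed.

Lemma R_thick_iso (V W : finType) (A : rel V) (B : rel W) :
  digraph_iso A B -> R_thick A -> R_thick B.
Proof.
move=> [f [f_bij fA]] /R_thick_twins[u [v [uv tuv]]]; apply/R_thick_twins.
by exists (f u), (f v); rewrite (bij_eq f_bij) (twins_iso _ _ f_bij fA).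
Qed.

Section TwinsAut.

Variables (V : finType) (A : rel V).

Lemma AutP (g : {perm V}) :
  reflect (forall x y, A (g x) (g y) = A x y) (g \in Defs.Aut A).
Proof.
rewrite inE; apply: (iffP forallP) => [gA x y | gA x].
  exact/eqP/(forallP (gA x)).
by apply/forallP => y; rewrite gA.
Qed.

Lemma twins_aut (g : {perm V}) u v :
  g \in Defs.Aut A -> twins A (g u) (g v) = twins A u v.
Proof. by move/AutP; apply: (twins_iso _ _ (injF_bij (@perm_inj _ g))). Qed.

Lemma tperm_twins_aut u v : twins A u v -> tperm u v \in Defs.Aut A.
Proof.
move=> tuv; have twin_tperm x : twins A x (tperm u v x).
  by case: tpermP => [->|->|_ _] //; [exact: twins_sym | exact: twins_refl].
by apply/AutP => x y; rewrite -(twins_arc (twin_tperm x) (twin_tperm y)).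
Qed.

Hypothesis vtrans : vertex_transitive A.

Lemma twin_exists w : R_thick A -> exists2 w', w' != w & twins A w w'.
Proof.
case/R_thick_twins=> [u [v [uv tuv]]]; have [g gA <-] := vtrans u w.
by exists (g v); [rewrite (inj_eq perm_inj) eq_sym | rewrite twins_aut].
Qed.

Lemma card_twin_class u v :
  #|[set w | twins A u w]| = #|[set w | twins A v w]|.
Proof.
have [g gA <-] := vtrans u v.
rewrite -[RHS](card_preimset _ (@perm_inj _ g)).
by apply: eq_card => w; rewrite !inE twins_aut.
Qed.

End TwinsAut.

Section UniformQuotient.

Variables (V : finType) (e : rel V) (b : nat).
Hypothesis e_equiv : equivalence_rel e.
Hypothesis card_class : forall v, #|[set w | e v w]| = b.

Let class v : {set V} := [set w | e v w].
Let rep v : V := nth v (enum (class v)) 0.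

Let class_eq u w : e u w -> class u = class w.
Proof. by move=> euw; apply/setP => z; rewrite !inE (e_equiv u w z).2. Qed.

Let mem_enum_class v : v \in enum (class v).
Proof. by rewrite mem_enum inE (e_equiv v v v).1. Qed.

Let size_enum_class v : size (enum (class v)) = b.
Proof. by rewrite -cardE card_class. Qed.

Let b_gt0 (v : V) : 0 < b.
Proof. by rewrite -(size_enum_class v); case: (enum _) (mem_enum_class v). Qed.

Let rep_in_class v : e v (rep v).
Proof.
have : rep v \in enum (class v) by rewrite mem_nth ?size_enum_class ?(b_gt0 v).
by rewrite mem_enum inE.
Qed.

Let rep_eq u v : e u v -> rep v = rep u.
Proof.
move=> euv; rewrite /rep (class_eq euv).
by rewrite (set_nth_default u) ?size_enum_class ?(b_gt0 u).
Qed.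

Lemma lexprod_emptyK_iso (A : rel V) :
    (forall u u' v v', e u u' -> e v v' -> A u v = A u' v') ->
  exists (S : finType) (sig : rel S), digraph_iso A (lexprod sig (emptyK b)).
Proof.
move=> A_compat; pose S := {v : V | rep v == v}.
have rep_idem v : rep (rep v) == rep v by rewrite (rep_eq (rep_in_class v)).
have index_lt v : index v (enum (class v)) < b.
  by rewrite -(size_enum_class v) index_mem.
pose f v : S * 'I_b := (exist _ (rep v) (rep_idem v), Ordinal (index_lt v)).
pose g (p : S * 'I_b) := nth (val p.1) (enum (class (val p.1))) p.2.
exists S, (fun r s => A (val r) (val s)), f; split.
  exists g => [v | [[r rep_r] i]].
    by rewrite /g /= -(class_eq (rep_in_class v)) nth_index.
  have : g (exist _ r rep_r, i) \in class r.
    by rewrite -mem_enum mem_nth ?size_enum_class.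
  rewrite inE => ew; congr pair; apply: val_inj => /=.
    by rewrite (rep_eq ew); apply/eqP.
  by rewrite -(class_eq ew) index_uniq ?enum_uniq ?size_enum_class.
move=> u v; rewrite /lexprod /emptyK andbF orbF /=.
by symmetry; apply: A_compat; apply: rep_in_class.
Qed.

End UniformQuotient.

Lemma twin_quotient_lexprod (V : finType) (A : rel V) :
    vertex_transitive A -> R_thick A ->
  exists (S : finType) (sig : rel S) (b : nat),
    2 <= b /\ digraph_iso A (lexprod sig (emptyK b)).
Proof.
move=> vtrans /R_thick_twins[u [v [uv tuv]]].
have [S [sig iso]] := lexprod_emptyK_iso (twins_equiv A)
  (card_twin_class vtrans ^~ u) (@twins_arc _ A).
exists S, sig, #|[set w | twins A u w]|; split => //.
have : [set u; v] \subset [set w | twins A u w].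
  by apply/subsetP => w; rewrite !inE => /orP[] /eqP->; rewrite ?twins_refl.
by move/subset_leq_card; rewrite cards2 uv.
Qed.

Section RegularGroups.

Variables (V : finType) (H : {group {perm V}}).
Hypothesis H_reg : regular_on H.

Lemma regular_on_inj x : {in H &, injective (fun h : {perm V} => h x)}.
Proof.
move=> h k hH kH hk; have /eqP/cards1P[a Ha] := H_reg x (h x).
have: k \in [set h' in H | h' x == h x] by rewrite inE kH hk eqxx.
have: h \in [set h' in H | h' x == h x] by rewrite inE hH eqxx.
by rewrite Ha !inE => /eqP-> /eqP->.
Qed.

Lemma regular_on_ex x y : exists2 h, h \in H & h x = y.
Proof.
have /eqP/cards1P[a Ha] := H_reg x y.
have: a \in [set h in H | h x == y] by rewrite Ha set11.
by rewrite inE => /andP[aH /eqP ax]; exists a.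
Qed.

Lemma card_regular_on (x : V) : #|H| = #|V|.
Proof.
rewrite -(card_in_imset (@regular_on_inj x)); apply: eq_card => y.
have [h hH <-] := regular_on_ex x y; exact: imset_f.
Qed.

Lemma card_regular_cent1 (t : {perm V}) x :
  t \in 'N(H) -> t x = x -> #|'C_H[t]| = #|[set y | t y == y]|.
Proof.
move=> nHt tx; have tVx : t^-1 x = x by rewrite -{1}tx permK.
have cent1_fix h : h \in H -> (h \in 'C[t]) = (t (h x) == h x).
  move=> hH; have hJ : h ^ t \in H by rewrite memJ_norm.
  have -> : (h \in 'C[t]) = (h ^ t == h) by rewrite conjg_fix; apply/cent1P/commgP.
  rewrite -(inj_in_eq (@regular_on_inj x)) //.
  by rewrite conjgE !permM tVx.
rewrite -(card_in_imset (sub_in2 (subsetP (subsetIl _ _)) (@regular_on_inj x))).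
apply: eq_card => y; rewrite inE; apply/imsetP/idP => [[h] | ty].
  by rewrite inE => /andP[hH]; rewrite cent1_fix // => fix_hx ->.
have [h hH hx] := regular_on_ex x y.
by exists h; rewrite // inE hH cent1_fix // hx.
Qed.

End RegularGroups.

Lemma card_le4_of_regular_tperm (V : finType) (H : {group {perm V}}) u v :
  regular_on H -> u != v -> tperm u v \in 'N(H) -> #|V| <= 4.
Proof.
move=> H_reg uv nHt; have [V_le2 | V_gt2] := leqP #|V| 2; first exact: leq_trans V_le2 _.
have /subsetPn[x _ x_uv] : ~~ ([set: V] \subset [set u; v]).
  by apply: contraTN V_gt2 => /subset_leq_card; rewrite cardsT cards2 uv -leqNgt.
have fixE : [set y | tperm u v y == y] = ~: [set u; v].
  apply/setP => y; rewrite !inE; case: tpermP => [->|->|/eqP/negbTE-> /eqP/negbTE->].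
  - by rewrite eqxx eq_sym (negbTE uv).
  - by rewrite eqxx (negbTE uv) orbT.
  - by rewrite eqxx.
have tx : tperm u v x = x by apply/eqP; move: x_uv; rewrite -in_setC -fixE inE.
have := cardSg (subsetIl H 'C[tperm u v]).
rewrite (card_regular_cent1 H_reg nHt tx) (card_regular_on H_reg x) fixE.
rewrite cardsCs setCK cards2 uv => dvd.
have := dvdn_sub dvd (dvdnn (#|V| - 2)).
by rewrite subKn ?(ltnW V_gt2) // => /(dvdn_leq (isT : 0 < 2)); lia.
Qed.

Lemma card_le4_of_normal_regular (V : finType) (A : rel V) (H : {group {perm V}}) :
  R_thick A -> regular_on H -> H <| Defs.Aut A -> #|V| <= 4.
Proof.
move=> /R_thick_twins[u [v [uv tuv]]] H_reg /normal_norm/subsetP nH.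
exact: card_le4_of_regular_tperm H_reg uv (nH _ (tperm_twins_aut tuv)).
Qed.

Lemma rmul_permE (gT : finGroupType) (g x : gT) : rmul_perm g x = x * g.
Proof. by rewrite permE. Qed.

Lemma Ghat_group_set (gT : finGroupType) : group_set (Ghat gT).
Proof.
have rmul_permM (g h : gT) : rmul_perm g * rmul_perm h = rmul_perm (g * h).
  by apply/permP => x; rewrite permM !rmul_permE mulgA.
apply/group_setP; split.
  have -> : 1 = rmul_perm (1 : gT) by apply/permP => x; rewrite rmul_permE perm1 mulg1.
  exact: imset_f.
by move=> _ _ /imsetP[g _ ->] /imsetP[h _ ->]; rewrite rmul_permM imset_f.
Qed.

Lemma Ghat_regular (gT : finGroupType) : regular_on (Ghat gT).
Proof.
move=> x y; apply/eqP/cards1P; exists (rmul_perm (x^-1 * y)); apply/setP => h.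
rewrite !inE; apply/andP/eqP => [[/imsetP[g _ ->]] | ->].
  by rewrite rmul_permE => /eqP <-; rewrite mulKg.
by rewrite imset_f // rmul_permE mulKVg.
Qed.

Lemma card_le4_of_normal_cayley (V : finType) (A : rel V) :
  R_thick A -> is_normal_cayley A -> #|V| <= 4.
Proof.
move=> thick [gT [S [_ Ghat_normal iso]]].
have [f [f_bij _]] := iso; rewrite (bij_eq_card f_bij).
apply: (@card_le4_of_normal_regular _ _ (Group (Ghat_group_set gT))).
- exact: R_thick_iso iso thick.
- exact: Ghat_regular.
- exact: Ghat_normal.
Qed.

Lemma digraph_iso_sym (V W : finType) (A : rel V) (B : rel W) :
  digraph_iso A B -> digraph_iso B A.
Proof.
move=> [f [[g fK gK] fA]]; exists g; split; first by exists f.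
by move=> x y; rewrite -fA !gK.
Qed.

Lemma C4E (i j : 'I_4) : C4 i j = (odd i != odd j).
Proof. by case: i => [[|[|[|[|?]]]] ?] //; case: j => [[|[|[|[|?]]]] ?]. Qed.

Lemma two_twin_classes_arcE (V : finType) (A : rel V) x y :
    loopless A -> vertex_transitive A -> A x y ->
    (forall w, twins A x w || twins A y w) ->
  forall u w, A u w = (twins A x u != twins A x w).
Proof.
move=> noloop vtrans Axy cover.
have twins_yE w : twins A y w = ~~ twins A x w.
  have [txw | ntxw] := boolP (twins A x w); last first.
    by move: (cover w); rewrite (negbTE ntxw).
  rewrite /twins -(eqP txw) eq_sym; apply/negbTE.
  exact: contraL (twins_noarc noloop) Axy.
have Ayx : A y x.
  have [h hA hx] := vtrans x y.
  have Ayhy : A y (h y) by rewrite -{1}hx; move/AutP: hA => ->.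
  have txhy : twins A x (h y).
    by apply: contraLR Ayhy; rewrite -twins_yE; apply: twins_noarc.
  by rewrite (twins_arc (twins_refl A y) txhy).
move=> u w; case: (boolP (twins A x u)) => tu; case: (boolP (twins A x w)) => tw;
  rewrite -?twins_yE in tu tw; rewrite -(twins_arc tu tw) //=; exact/negbTE/noloop.
Qed.

Lemma C4_iso_of_small_R_thick (V : finType) (A : rel V) :
    loopless A -> vertex_transitive A -> R_thick A -> #|V| <= 4 -> has_arc A ->
  digraph_iso A C4.
Proof.
move=> noloop vtrans thick V_le4 [x [y Axy]].
have [x' x'x /eqP key_x'] := twin_exists vtrans x thick.
have [y' y'y /eqP key_y'] := twin_exists vtrans y thick.
have key_xy : twin_key A x != twin_key A y.
  by apply: contraL Axy; apply: twins_noarc.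
have neq_key a b : twin_key A a != twin_key A b -> a != b by apply: contraNneq => ->.
have uniq_xy : uniq [:: x; y; x'; y'].
  rewrite /= !inE !negb_or [x == x']eq_sym [y == y']eq_sym x'x y'y.
  by rewrite !neq_key //= -?key_x' -?key_y' // eq_sym.
pose g (i : 'I_4) := nth x [:: x; y; x'; y'] i.
have g_bij : bijective g.
  apply: inj_card_bij; last by rewrite card_ord.
  by move=> i j /eqP; rewrite nth_uniq // => /eqP/val_inj.
have twins_x_g i : twins A x (g i) = ~~ odd i.
  case: i => [[|[|[|[|?]]]] ?] //;
    by rewrite /twins /= -?key_x' -?key_y' ?eqxx ?(negbTE key_xy).
have cover w : twins A x w || twins A y w.
  have [ginv _ ginvK] := g_bij; rewrite -(ginvK w).
  case: (ginv w) => [[|[|[|[|?]]]] ?] //;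
    by rewrite /twins /= -?key_x' -?key_y' eqxx ?orbT.
apply: digraph_iso_sym; exists g; split => // i j.
rewrite (two_twin_classes_arcE noloop vtrans Axy cover) !twins_x_g C4E.
by case: odd; case: odd.
Qed.

Theorem lemma5p2 (V : finType) (A : rel V) :
  loopless A -> vertex_transitive A -> R_thick A ->
  [/\ (exists (S : finType) (sig : rel S) (b : nat),
         (2 <= b)%N /\ digraph_iso A (lexprod sig (emptyK b))),
      (is_normal_cayley A -> (#|V| <= 4)%N) &
      (normal_circulant A -> has_arc A -> digraph_iso A C4)].
Proof.
move=> noloop vtrans thick; split.
- exact: twin_quotient_lexprod.
- exact: card_le4_of_normal_cayley.
- move=> [H [_ _ H_reg H_normal]].
  apply: C4_iso_of_small_R_thick => //.
  exact: card_le4_of_normal_regular thick H_reg H_normal.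
Qed.
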